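(* Let $K\ge1$ and let $\theta_1,\dots,\theta_K$ be unknown parameters with $\theta_i\in\Theta_i$. Data $\mathbf X=(X_1,\dots,X_K)$ are sampled from an unknown distribution (the $X_i$ may be arbitrarily dependent). For each $i\in[K]$ let $(E_i(\theta))_{\theta\in\Theta_i}$ be a family of e-values (for every $\theta\in\Theta_i$, $E_i(\theta)\ge0$ and $\mathbb{E}[E_i(\theta)]\le1$ whenever $\theta$ is the true value of $\theta_i$), and let $C_i(\alpha)=\{\theta\in\Theta_i: E_i(\theta)<1/\alpha\}$ be the associated marginal e-CIs. Let $\mathcal S$ be any selection rule and $S=\mathcal S(\mathbf X)\subseteq[K]$. The e-BY procedure at level $\delta\in(0,1)$ reports, for each $i\in S$, the interval $C_i(\alpha_i)$ with $\alpha_i=\delta|S|/K$. Then $$\mathrm{FCR}=\mathbb{E}\left[\frac{\sum_{i\in S}\mathbf 1\{\theta_i\notin C_i(\delta|S|/K)\}}{|S|\vee 1}\right]\le\delta .$$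
   Context: $[K]=\{1,\dots,K\}$. The false coverage rate (FCR) is the expectation of the false coverage proportion, the fraction of selected parameters not covered by their reported intervals. *)

From HB Require Import structures.
From mathcomp Require Import all_boot all_order all_algebra.
From mathcomp Require Import all_classical all_reals all_analysis.
Set Implicit Arguments. Unset Strict Implicit. Unset Printing Implicit Defensive.
Import Order.TTheory GRing.Theory Num.Theory.
Local Open Scope classical_set_scope.
Local Open Scope ring_scope.

Definition eCI (R : realType) (Omega Theta : Type)
  (Ei : Theta -> Omega -> R) (alpha : R) (w : Omega) : set Theta :=
  [set t | Ei t w < alpha^-1].

Definition eBY_level (R : realType) (K : nat) (delta : R) (S : {set 'I_K}) : R :=
  delta * #|S|%:R / K%:R.

Definition eBY_FCP (R : realType) (Omega : Type) (K : nat)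
  (Theta : 'I_K -> Type) (theta : forall i, Theta i)
  (E : forall i, Theta i -> Omega -> R) (S : Omega -> {set 'I_K})
  (delta : R) (w : Omega) : R :=
  (\sum_(i in S w)
      (theta i \notin eCI (E i) (eBY_level delta (S w)) w)%:R)
  / (maxn #|S w| 1)%:R.

From HB Require Import structures.
From mathcomp Require Import all_boot all_order all_algebra.
From mathcomp Require Import all_classical all_reals all_analysis.
From mathcomp Require Import ring.
Import Order.TTheory GRing.Theory Num.Theory.
Local Open Scope classical_set_scope.
Local Open Scope ring_scope.

(* The e-BY false coverage proportion is bounded pointwise by
   (delta / K) * sum_i E_i(theta_i): a parameter missed by C_i(alpha) has
   E_i(theta_i) >= 1 / alpha, and with alpha = delta |S| / K the factor |S|
   cancels against the normalisation 1 / |S|.  Integrating, each e-value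
   contributes at most 1, so FCR <= (delta / K) * K = delta.  Since the bound
   is pointwise, neither the dependence between the X_i nor the measurability
   of the selection rule plays any role. *)

(* No measurability is required: the integral of a nonnegative function is a
   supremum over the simple functions below it. *)
Lemma ge0_le_integralT (R : realType) d (T : measurableType d)
    (mu : {measure set T -> \bar R}) (f g : T -> \bar R) :
  (forall x, (0 <= f x)%E) -> (forall x, (f x <= g x)%E) ->
  (\int[mu]_x f x <= \int[mu]_x g x)%E.
Proof.
move=> f_ge0 le_fg.
have g_ge0 x : (0 <= g x)%E by apply: le_trans (le_fg x).
rewrite !ge0_integralTE //; apply: ereal_sup_le => _ [h h_le_f <-].
by exists h => //= x; apply: le_trans (h_le_f x) (le_fg x).
Qed.

Lemma integral_sum_evalues_le (R : realType) d (T : measurableType d)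
    (mu : {measure set T -> \bar R}) (K : nat) (f : 'I_K -> T -> R) :
  (forall i x, 0 <= f i x) -> (forall i, measurable_fun setT (f i)) ->
  (forall i, (\int[mu]_x (f i x)%:E <= 1)%E) ->
  (\int[mu]_x (\sum_i f i x)%:E <= K%:R%:E)%E.
Proof.
move=> f_ge0 f_meas f_int.
under eq_integral do rewrite -sumEFin.
rewrite ge0_integral_sum //; last 2 first.
- by move=> i; apply/measurable_realfun.measurable_EFinP.
- by move=> i x _; rewrite lee_fin.
apply: le_trans (_ : (\sum_(i < K) 1 <= _)%E).
  by apply: lee_sum => i _.
by rewrite sumEFin big_const_ord iter_addr addr0.
Qed.

Section eBY_pointwise.
Variables (R : realType) (Omega : Type).

Lemma notin_eCI_le (Theta : Type) (Ei : Theta -> Omega -> R)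
    (alpha : R) (w : Omega) (t : Theta) :
  0 < alpha -> 0 <= Ei t w -> (t \notin eCI Ei alpha w)%:R <= alpha * Ei t w.
Proof.
move=> alpha_gt0 Ei_ge0; have [_|missed] := boolP (t \in eCI Ei alpha w).
  by rewrite mulr0n mulr_ge0 // ltW.
have : ~~ (Ei t w < alpha^-1) by apply: contra missed => lt; rewrite inE.
rewrite -leNgt => le_inv_Ei.
by rewrite mulr1n -(mulfV (lt0r_neq0 alpha_gt0)) ler_wpM2l // ltW.
Qed.

Variables (K : nat) (Theta : 'I_K -> Type) (theta : forall i, Theta i).
Variables (E : forall i, Theta i -> Omega -> R) (S : Omega -> {set 'I_K}).
Variable delta : R.
Hypothesis E_ge0 : forall i (t : Theta i) (w : Omega), 0 <= E i t w.
Hypothesis delta_gt0 : 0 < delta.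

Lemma eBY_FCP_ge0 w : 0 <= eBY_FCP theta E S delta w.
Proof. by rewrite divr_ge0 // sumr_ge0. Qed.

Lemma eBY_FCP_le_sum_evalues w : (0 < K)%N ->
  eBY_FCP theta E S delta w <= delta / K%:R * \sum_i E i (theta i) w.
Proof.
move=> K_gt0; rewrite /eBY_FCP.
have K_pos : 0 < K%:R :> R by rewrite ltr0n.
have rhs_ge0 : 0 <= delta / K%:R * \sum_i E i (theta i) w.
  by rewrite mulr_ge0 ?divr_ge0 ?sumr_ge0 // ltW.
have [->|S_neq0] := eqVneq (S w) finset.set0; first by rewrite big_set0 mul0r.
have S_gt0 : (0 < #|S w|)%N by rewrite card_gt0.
rewrite (maxn_idPl S_gt0); set n := #|S w|.
have n_pos : 0 < n%:R :> R by rewrite ltr0n.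
set alpha := eBY_level delta (S w).
have alpha_gt0 : 0 < alpha by rewrite divr_gt0 // mulr_gt0.
have miss_le i : i \in S w ->
    (theta i \notin eCI (E i) alpha w)%:R <= alpha * E i (theta i) w.
  by move=> _; apply: notin_eCI_le.
apply: le_trans (ler_wpM2r _ (ler_sum _ miss_le)) _; first by rewrite invr_ge0 ltW.
have -> : (\sum_(i in S w) alpha * E i (theta i) w) / n%:R =
          delta / K%:R * \sum_(i in S w) E i (theta i) w.
  by rewrite -mulr_sumr /alpha /eBY_level; field; rewrite !lt0r_neq0.
apply: ler_wpM2l; first by rewrite divr_ge0 ?ltW.
by rewrite [leRHS](bigID (mem (S w))) /= lerDl sumr_ge0.
Qed.

End eBY_pointwise.

Theorem theorem2 (R : realType) (d : measure_display) (Omega : measurableType d)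
  (P : probability Omega R) (K : nat) (HK : (1 <= K)%N)
  (Theta : 'I_K -> Type) (theta : forall i, Theta i)
  (E : forall i, Theta i -> Omega -> R)
  (E_ge0 : forall i (t : Theta i) (w : Omega), 0 <= E i t w)
  (E_meas : forall i, measurable_fun setT (E i (theta i)))
  (E_eval : forall i, (\int[P]_w (E i (theta i) w)%:E <= 1)%E)
  (S : Omega -> {set 'I_K})
  (S_meas : forall A : {set 'I_K}, measurable [set w | S w = A])
  (delta : R) (Hdelta : 0 < delta < 1) :
  (\int[P]_w (eBY_FCP theta E S delta w)%:E <= delta%:E)%E.
Proof.
have delta_gt0 : 0 < delta by case/andP: Hdelta.
have c_ge0 : 0 <= delta / K%:R by rewrite divr_ge0 // ltW.
pose sumE w := \sum_i E i (theta i) w.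
apply: le_trans (_ : (\int[P]_w ((delta / K%:R)%:E * (sumE w)%:E) <= _)%E).
  apply: ge0_le_integralT => w; first by rewrite lee_fin eBY_FCP_ge0.
  by rewrite -EFinM lee_fin eBY_FCP_le_sum_evalues.
rewrite ge0_integralZl_EFin //; last 2 first.
- by move=> w _; rewrite lee_fin sumr_ge0.
- by apply/measurable_realfun.measurable_EFinP; apply: measurable_sum.
apply: le_trans (_ : ((delta / K%:R)%:E * K%:R%:E <= _)%E).
  by rewrite lee_wpmul2l ?lee_fin // integral_sum_evalues_le.
by rewrite -EFinM lee_fin divfK // pnatr_eq0 -lt0n.
Qed.
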